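(* Let $n\ge2$ and let $P_m(u)=u^m+a_1u^{m-1}+\cdots+a_{m-1}u+a_m$ be a polynomial of degree $m\ge1$ in the polar $n$-complex variable $u$ with polar $n$-complex coefficients $a_l$. Then there exist complex numbers $v_{p+}$ ($p=1,\dots,m$), whose non-real members occur in complex-conjugate pairs, and for even $n$ complex numbers $v_{p-}$ ($p=1,\dots,m$) with the same property, and real numbers $v_{kp},\tilde v_{kp}$ ($k=1,\dots,\lfloor(n-1)/2\rfloor$, $p=1,\dots,m$), such that for every polar $n$-complex $u$ $$P_m(u)=\prod_{p=1}^m(u-u_p),\qquad u_p=e_+v_{p+}+e_-v_{p-}+\sum_{k=1}^{\lfloor(n-1)/2\rfloor}\big(e_kv_{kp}+\tilde e_k\tilde v_{kp}\big),$$ where the $e_-$ term is present only for even $n$ and the product is computed in the complexified algebra (polar $n$-complex numbers with complex components).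
   Context: Polar $n$-complex numbers: $u=x_0+h_1x_1+\cdots+h_{n-1}x_{n-1}$, $x_j\in\mathbb{R}$, $h_0=1$, componentwise addition, bilinear multiplication $h_jh_k=h_{(j+k)\bmod n}$; the complexified algebra allows $x_j\in\mathbb{C}$ with the same rules. Canonical base: $e_+=\frac1n\sum_ph_p$, for even $n$ $e_-=\frac1n\sum_p(-1)^ph_p$, $e_k=\frac2n\sum_p\cos(2\pi kp/n)h_p$, $\tilde e_k=\frac2n\sum_p\sin(2\pi kp/n)h_p$ for $k=1,\dots,\lfloor(n-1)/2\rfloor$. *)

From HB Require Import structures.
From mathcomp Require Import all_boot all_order all_algebra.
From mathcomp Require Import reals trigo.
From mathcomp Require Import complex.
Set Implicit Arguments. Unset Strict Implicit. Unset Printing Implicit Defensive.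
Import Order.TTheory GRing.Theory Num.Theory.
Local Open Scope ring_scope.

(* A polar n-complex number with components in K: x_0 h_0 + ... + x_{n-1} h_{n-1},
   represented by its component function 'I_n -> K. *)
Definition polar (K : Type) (n : nat) := {ffun 'I_n -> K}.

Section PolarOps.
Variable K : comNzRingType.
Variable n : nat.

Definition padd (x y : polar K n) : polar K n := [ffun i => x i + y i].
Definition psub (x y : polar K n) : polar K n := [ffun i => x i - y i].
Definition pzero : polar K n := [ffun _ => 0].
Definition pone : polar K n := [ffun i : 'I_n => if (i : nat) == 0%N then 1 else 0].
(* bilinear product with h_j h_k = h_{(j+k) mod n} *)
Definition pmul (x y : polar K n) : polar K n :=
  [ffun i : 'I_n => \sum_(j < n) \sum_(k < n)
               (if ((j + k) %% n == i)%N then x j * y k else 0)].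
Definition ppow (u : polar K n) (k : nat) : polar K n := iter k (pmul u) pone.

(* P_m(u) = u^m + a_1 u^{m-1} + ... + a_m, with a l = a_{l+1} *)
Definition ppoly (m : nat) (a : 'I_m -> polar K n) (u : polar K n) : polar K n :=
  padd (ppow u m) (\big[padd/pzero]_(l < m) pmul (a l) (ppow u (m - l.+1))).

Definition pprod (m : nat) (F : 'I_m -> polar K n) : polar K n :=
  \big[pmul/pone]_(p < m) F p.
End PolarOps.

Section Base.
Variable R : realType.
Variable n : nat.

Definition e_plus : polar R n := [ffun p => n%:R^-1].
Definition e_minus : polar R n := [ffun p : 'I_n => (-1) ^+ p / n%:R].
Definition e_k (k : nat) : polar R n :=
  [ffun p : 'I_n => 2 / n%:R * cos (2 * pi * k%:R * (p : nat)%:R / n%:R)].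
Definition et_k (k : nat) : polar R n :=
  [ffun p : 'I_n => 2 / n%:R * sin (2 * pi * k%:R * (p : nat)%:R / n%:R)].

Definition toC (x : R) : R[i] := Complex x 0.
Definition complexify (x : polar R n) : polar R[i] n := [ffun i => toC (x i)].

Definition root_elt (vp vm : R[i]) (v vt : 'I_(n.-1./2) -> R) : polar R[i] n :=
  [ffun i => toC (e_plus i) * vp
             + (if ~~ odd n then toC (e_minus i) * vm else 0)
             + \sum_(k < n.-1./2)
                 (toC (e_k k.+1 i) * toC (v k) + toC (et_k k.+1 i) * toC (vt k))].
End Base.

(* the non-real members of a family occur in complex-conjugate pairs
   (with multiplicities): the multiset is stable under conjugation *)
Definition conj_closed (R : realType) (m : nat) (w : 'I_m -> R[i]) : bool :=
  perm_eq [seq Num.conj (w p) | p <- enum 'I_m] [seq w p | p <- enum 'I_m].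

From HB Require Import structures.
From mathcomp Require Import all_boot all_order all_algebra.
From mathcomp Require Import reals trigo complex.
From mathcomp Require Import ring lra zify.
Import Order.TTheory GRing.Theory Num.Theory.
Set Implicit Arguments. Unset Strict Implicit. Unset Printing Implicit Defensive.
Local Open Scope ring_scope.

(* For z with z ^+ n = 1, evaluation u |-> u(z) = \sum_p x_p z^p (h_p |-> z^p) is a
   ring morphism from the complexified polar n-complex numbers to C, and for a
   primitive n-th root omega the evaluations at omega^j, j < n, are jointly
   injective (discrete Fourier inversion).  At omega^j the polynomial P_m becomes
   the monic scalar polynomial P^(j) = X^m + \sum_l a_l(omega^j) X^(m-l), which
   splits over C.  The canonical base is dual to these evaluations: e_+ and e_-
   pick out the frequencies 0 and n/2, and e_k - i et_k, e_k + i et_k (up to a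
   factor 2) the frequencies k and n - k.  So taking for v_{p+}, v_{p-} and
   v_{kp} + i vt_{kp} the roots of P^(0), P^(n/2) and P^(k), the element u_p
   evaluates at every frequency to a root of P^(j): at n - k the conjugate of a
   root of P^(k), which is a root of P^(n-k) because the a_l are real.  For the
   same reason P^(0) and P^(n/2) are real, so their roots come in conjugate pairs. *)

Section MonicOfCoefs.
Variables (K : nzRingType) (m : nat) (c : 'I_m -> K).

Definition monic_of_coefs : {poly K} :=
  'X^m + \sum_(l < m) (c l)%:P * 'X^(m - l.+1).

Let size_tail :
  (size (\sum_(l < m) (c l)%:P * 'X^(m - l.+1))%R < size ('X^m : {poly K}))%N.
Proof.
rewrite size_polyXn ltnS.
apply: (big_ind (fun p : {poly K} => size p <= m)%N) => [|p q sp sq|l _].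
- by rewrite size_poly0.
- by rewrite (leq_trans (size_polyD _ _)) // geq_max sp sq.
- rewrite mul_polyC (leq_trans (size_scale_leq _ _)) // size_polyXn.
  by have := ltn_ord l; lia.
Qed.

Lemma monic_of_coefs_monic : monic_of_coefs \is monic.
Proof. by rewrite monicE lead_coefDl ?size_tail // lead_coefXn. Qed.

Lemma size_monic_of_coefs : size monic_of_coefs = m.+1.
Proof. by rewrite size_polyDl ?size_tail // size_polyXn. Qed.

End MonicOfCoefs.

Lemma map_monic_of_coefs (K L : nzRingType) (f : {rmorphism K -> L}) m (c : 'I_m -> K) :
  map_poly f (monic_of_coefs c) = monic_of_coefs (f \o c).
Proof.
rewrite /monic_of_coefs rmorphD /= map_polyXn rmorph_sum.
congr (_ + _); apply: eq_bigr => l _.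
by rewrite rmorphM /= map_polyC map_polyXn.
Qed.

Section PolarEval.
Variables (K L : comNzRingType) (f : {rmorphism K -> L}) (n : nat) (z : L).

Definition peval (x : polar K n) : L := \sum_(p < n) f (x p) * z ^+ p.

Lemma peval_padd x y : peval (padd x y) = peval x + peval y.
Proof. by rewrite /peval -big_split; apply: eq_bigr => p _; rewrite ffunE rmorphD mulrDl. Qed.

Lemma peval_psub x y : peval (psub x y) = peval x - peval y.
Proof. by rewrite /peval -sumrB; apply: eq_bigr => p _; rewrite ffunE rmorphB mulrBl. Qed.

Lemma peval_pzero : peval (pzero K n) = 0.
Proof. by rewrite /peval big1 // => p _; rewrite ffunE rmorph0 mul0r. Qed.

Lemma peval_big_padd m (F : 'I_m -> polar K n) :
  peval (\big[@padd K n/pzero K n]_(l < m) F l) = \sum_(l < m) peval (F l).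
Proof. exact: (big_morph _ peval_padd peval_pzero). Qed.

Hypothesis n_gt0 : (0 < n)%N.

Lemma peval_pone : peval (pone K n) = 1.
Proof.
rewrite /peval (bigD1 (Ordinal n_gt0)) //= big1 ?addr0 => [|p p0].
  by rewrite ffunE /= rmorph1 mul1r.
by move: p0; rewrite ffunE -val_eqE /= => /negPf->; rewrite rmorph0 mul0r.
Qed.

Hypothesis z_unity : z ^+ n = 1.

Lemma peval_pmul x y : peval (pmul x y) = peval x * peval y.
Proof.
rewrite /peval mulr_suml.
under eq_bigr => i _ do rewrite ffunE rmorph_sum mulr_suml.
rewrite exchange_big /=; apply: eq_bigr => j _.
under eq_bigr => i _ do rewrite rmorph_sum mulr_suml.
rewrite exchange_big /= mulr_sumr; apply: eq_bigr => k _.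
rewrite (bigD1 (Ordinal (ltn_pmod (j + k) n_gt0))) //= eqxx big1 ?addr0.
  by rewrite rmorphM expr_mod // exprD mulrACA.
by move=> i; rewrite -val_eqE /= eq_sym => /negPf->; rewrite rmorph0 mul0r.
Qed.

Lemma peval_ppow u k : peval (ppow u k) = peval u ^+ k.
Proof.
elim: k => [|k IHk]; first by rewrite expr0 peval_pone.
by rewrite /ppow iterS -/(ppow u k) peval_pmul IHk exprS.
Qed.

Lemma peval_pprod m (F : 'I_m -> polar K n) :
  peval (pprod F) = \prod_(l < m) peval (F l).
Proof. exact: (big_morph _ peval_pmul peval_pone). Qed.

Lemma peval_ppoly m (a : 'I_m -> polar K n) u :
  peval (ppoly a u) = (monic_of_coefs (fun l => peval (a l))).[peval u].
Proof.
rewrite peval_padd peval_big_padd peval_ppow hornerD hornerXn horner_sum.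
by congr (_ + _); apply: eq_bigr => l _; rewrite peval_pmul peval_ppow hornerCM hornerXn.
Qed.

End PolarEval.

Lemma dvdn_lt_double d c : (c < d.*2 -> (d %| c) = (c == 0) || (c == d))%N.
Proof.
move=> c_lt; have [c_lt_d | d_le_c] := ltnP c d.
  by rewrite /dvdn modn_small //; case: eqP => //= _; apply/esym/eqP; lia.
rewrite -(subnKC d_le_c) /dvdn modnDl modn_small; last by lia.
by apply/idP/idP => [/eqP|/orP[]/eqP]; lia.
Qed.

Section PrimRootFourier.
Variables (K : idomainType) (n : nat) (z : K).
Hypothesis z_prim : n.-primitive_root z.
Let n_gt0 := prim_order_gt0 z_prim.

Lemma sum_expr_prim_root c :
  \sum_(j < n) (z ^+ c) ^+ j = if (n %| c)%N then n%:R else 0.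
Proof.
rewrite (prim_order_dvd z_prim); case: eqP => [->|/eqP zc_neq1].
  by rewrite (eq_bigr (fun=> 1)) => [|j _]; rewrite ?expr1n // sumr_const card_ord.
have: (z ^+ c) ^+ n == 1 by rewrite exprAC (prim_expr_order z_prim) expr1n.
by rewrite -(prednK n_gt0) expfS_eq1 (negPf zc_neq1) => /eqP.
Qed.

Lemma sum_expr_prim_root_small c : (c < n.*2)%N ->
  \sum_(j < n) (z ^+ c) ^+ j = ((c == 0) || (c == n))%:R * n%:R.
Proof.
by move=> c_lt; rewrite sum_expr_prim_root dvdn_lt_double //; case: (_ || _); rewrite ?mul1r ?mul0r.
Qed.

Lemma prim_root_half : ~~ odd n -> z ^+ n./2 = -1.
Proof.
move=> n_even; have half_gt0 : (0 < n./2)%N by have := odd_double_half n; lia.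
have: (z ^+ n./2) ^+ 2 == 1.
  have n_double : (n./2.*2 = n)%N by have := odd_double_half n; lia.
  by rewrite -exprM muln2 n_double (prim_expr_order z_prim).
rewrite sqrf_eq1 -(prim_order_dvd z_prim) => /orP[/(dvdn_leq half_gt0)|/eqP //].
by have := odd_double_half n; lia.
Qed.

Lemma peval_inversion (x : polar K n) (q : 'I_n) :
  \sum_(j < n) (z ^+ (n - q)) ^+ j * peval idfun (z ^+ j) x = n%:R * x q.
Proof.
have inner (p : 'I_n) :
    \sum_(j < n) (z ^+ (n - q)) ^+ j * (x p * (z ^+ j) ^+ p) = (p == q)%:R * n%:R * x p.
  under eq_bigr => j _ do rewrite mulrCA [(z ^+ j) ^+ p]exprAC -exprMn -exprD.
  have := ltn_ord p; have := ltn_ord q => q_lt p_lt.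
  rewrite -mulr_sumr sum_expr_prim_root_small; last by lia.
  have -> : (n - q + p == 0)%N = false by lia.
  have -> : (n - q + p == n)%N = (p == q) by rewrite -val_eqE /=; apply/eqP/eqP; lia.
  by rewrite mulrC.
rewrite /peval; under eq_bigr => j _ do rewrite mulr_sumr.
rewrite exchange_big /=; under eq_bigr => p _ do rewrite inner.
by rewrite (bigD1 q) //= eqxx mul1r big1 ?addr0 // => p /negPf->; rewrite !mul0r.
Qed.

Lemma peval_inj (x y : polar K n) :
  (forall j, (j < n)%N -> peval idfun (z ^+ j) x = peval idfun (z ^+ j) y) -> x = y.
Proof.
move=> eq_xy; apply/ffunP => q; apply: (mulfI (prim_root_dvd_eq0 z_prim (dvdnn n))).
by rewrite -!peval_inversion; apply: eq_bigr => j _; rewrite eq_xy.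
Qed.

End PrimRootFourier.

Section UnitCircle.
Variable R : realType.
Implicit Types (s t : R) (x : R[i]).

Definition cis t : R[i] := Complex (cos t) (sin t).

Lemma cisD s t : cis (s + t) = cis s * cis t.
Proof. by apply/eqP; rewrite eq_complex /= cosD sinD !eqxx /= addrC eqxx. Qed.

Lemma cis0 : cis 0 = 1.
Proof. by apply/eqP; rewrite eq_complex /= cos0 sin0 !eqxx. Qed.

Lemma cisX t k : cis t ^+ k = cis (k%:R * t).
Proof.
elim: k => [|k IHk]; first by rewrite expr0 mul0r cis0.
by rewrite exprS IHk -cisD -natr1 mulrDl mul1r addrC.
Qed.

Lemma conjc_cis t : conjc (cis t) = cis (- t).
Proof. by rewrite /cis /= cosN sinN. Qed.

Lemma cis_neq0 t : cis t != 0.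
Proof.
apply/eqP => cis_t0; have /eqP := cisD t (- t).
by rewrite subrr cis0 cis_t0 mul0r oner_eq0.
Qed.

Lemma toCE t : toC t = real_complex R t.
Proof. by []. Qed.

Lemma toC_2cos t : toC (2 * cos t) = cis t + conjc (cis t).
Proof. by apply/eqP; rewrite eq_complex /=; apply/andP; split; apply/eqP; ring. Qed.

Lemma toC_2sin t : toC (2 * sin t) = 'i%C * (conjc (cis t) - cis t).
Proof. by apply/eqP; rewrite eq_complex /=; apply/andP; split; apply/eqP; ring. Qed.

Lemma toC_Re_Im x : toC (complex.Re x) + 'i%C * toC (complex.Im x) = x.
Proof. by rewrite [RHS]complexE. Qed.

Lemma toC_Re_Im_conj x : toC (complex.Re x) - 'i%C * toC (complex.Im x) = conjc x.
Proof. by case: x => a b; apply/eqP; rewrite eq_complex /=; apply/andP; split; apply/eqP; ring. Qed.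

Lemma conjC_conjc x : Num.conj x = conjc x.
Proof.
case: x => a b; have -> : Complex a b = real_complex R a + 'i * real_complex R b.
  by apply/eqP; rewrite eq_complex /= !mul0r !mul1r !subr0 !addr0 !add0r !eqxx.
rewrite conjC_rect ?complex_real //.
by apply/eqP; rewrite eq_complex /= !mul0r !mul1r !subr0 !addr0 !add0r ?oppr0 ?sub0r !eqxx.
Qed.

Definition omega n : R[i] := cis (2 * pi / n%:R).

Lemma omega_expr_neq1 n k : (0 < k < n)%N -> omega n ^+ k != 1.
Proof.
case/andP => k_gt0 k_lt_n; have n_gt0 : (0 < n)%N := ltn_trans k_gt0 k_lt_n.
have nR_neq0 : (n%:R : R) != 0 by rewrite pnatr_eq0 -lt0n.
pose y : R := pi * (k%:R / n%:R).
have sin_y_gt0 : 0 < sin y.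
  apply: sin_gt0_pi; rewrite /y mulr_gt0 ?pi_gt0 ?divr_gt0 ?ltr0n //=.
  by rewrite gtr_pMr ?pi_gt0 // ltr_pdivrMr ?ltr0n // mul1r ltr_nat.
rewrite /omega cisX; have -> : k%:R * (2 * pi / n%:R) = y *+ 2.
  by rewrite /y -mulr_natr; field.
apply/negP => /eqP[cos_2y _].
have : sin y ^+ 2 = 0 by move: cos_2y; rewrite cos_mulr2n cos2sin2 !expr2 => ?; lra.
by move/eqP; rewrite expf_eq0 /= (gt_eqF sin_y_gt0).
Qed.

Lemma omega_prim n : (0 < n)%N -> n.-primitive_root (omega n).
Proof.
move=> n_gt0; have omega_n : omega n ^+ n = 1.
  have nR_neq0 : (n%:R : R) != 0 by rewrite pnatr_eq0 -lt0n.
  rewrite /omega cisX; have -> : n%:R * (2 * pi / n%:R) = pi *+ 2 :> R.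
    by rewrite -mulr_natr; field.
  by apply/eqP; rewrite eq_complex /= cos2pi sin2pi !eqxx.
have [k k_prim k_dvd_n] := prim_order_exists n_gt0 omega_n.
have k_gt0 := prim_order_gt0 k_prim; have k_le_n := dvdn_leq n_gt0 k_dvd_n.
have [k_lt_n | n_le_k] := ltnP k n.
  have k_range : (0 < k < n)%N by rewrite k_gt0.
  by have := omega_expr_neq1 k_range; rewrite (prim_expr_order k_prim) eqxx.
have k_eq_n : k = n by lia.
by rewrite k_eq_n in k_prim.
Qed.

Lemma conjc_omegaX n k p : (0 < n)%N -> (k <= n)%N ->
  conjc ((omega n ^+ k) ^+ p) = (omega n ^+ (n - k)) ^+ p.
Proof.
move=> n_gt0 k_le_n.
apply: (mulfI (expf_neq0 p (expf_neq0 k (cis_neq0 (2 * pi / n%:R))))).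
rewrite -exprMn -exprD subnKC // (prim_expr_order (omega_prim n_gt0)) expr1n.
by rewrite /omega !cisX conjc_cis -cisD subrr cis0.
Qed.

End UnitCircle.

Section CanonicalBaseSpectrum.
Variables (R : realType) (n : nat).
Hypothesis n_gt0 : (0 < n)%N.
Local Notation omega := (omega R n).
Local Notation h := n.-1./2.
Let omega_primitive := omega_prim R n_gt0.
Let halves : (odd n + n./2.*2 = n /\ odd n.-1 + h.*2 = n.-1)%N.
Proof. by rewrite !odd_double_half. Qed.

Lemma peval_realE z (x : polar R n) :
  peval (real_complex R) z x = \sum_(p < n) toC (x p) * z ^+ p.
Proof. by []. Qed.

Lemma natC_neq0 : (n%:R : R[i]) != 0.
Proof. by rewrite pnatr_eq0 -lt0n. Qed.

Lemma toC_invn : toC (n%:R^-1) = (n%:R : R[i])^-1.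
Proof. by rewrite toCE fmorphV rmorph_nat. Qed.

Lemma cis_base k p : cis (2 * pi * k%:R * p%:R / n%:R) = (omega ^+ k) ^+ p.
Proof. by rewrite -exprM /omega cisX natrM; congr cis; ring. Qed.

Lemma peval_e_plus j : (j < n)%N ->
  peval (real_complex R) (omega ^+ j) (e_plus R n) = (j == 0)%:R.
Proof.
move=> j_lt_n; rewrite peval_realE.
under eq_bigr do rewrite ffunE toC_invn.
rewrite -mulr_sumr (sum_expr_prim_root_small omega_primitive); last by lia.
by rewrite (ltn_eqF j_lt_n) orbF mulrCA mulVf ?mulr1 // natC_neq0.
Qed.

Lemma peval_e_minus j : ~~ odd n -> (j < n)%N ->
  peval (real_complex R) (omega ^+ j) (e_minus R n) = (j == n./2)%:R.
Proof.
move=> n_even j_lt_n; rewrite peval_realE.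
have toC_e_minus p : toC ((-1) ^+ p / n%:R) = (omega ^+ n./2) ^+ p / n%:R.
  rewrite toCE rmorphM /= fmorphV rmorphXn rmorphN1 rmorph_nat.
  by rewrite (prim_root_half omega_primitive).
under eq_bigr => p _ do rewrite ffunE toC_e_minus mulrAC -exprMn -exprD.
rewrite -mulr_suml (sum_expr_prim_root_small omega_primitive); last by move: halves; lia.
have -> : (n./2 + j == 0)%N = false by move: halves; lia.
have -> : (n./2 + j == n) = (j == n./2) by apply/eqP/eqP; move: halves; lia.
by rewrite mulfK // natC_neq0.
Qed.

Lemma toC_e_k k p : (k <= n)%N ->
  toC (e_k R n k p) = n%:R^-1 * ((omega ^+ k) ^+ p + (omega ^+ (n - k)) ^+ p).
Proof.
move=> k_le_n; rewrite ffunE -mulrA mulrCA toCE rmorphM /= -!toCE toC_invn.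
by rewrite toC_2cos cis_base conjc_omegaX.
Qed.

Lemma toC_et_k k p : (k <= n)%N ->
  toC (et_k R n k p) = n%:R^-1 * ('i%C * ((omega ^+ (n - k)) ^+ p - (omega ^+ k) ^+ p)).
Proof.
move=> k_le_n; rewrite ffunE -mulrA mulrCA toCE rmorphM /= -!toCE toC_invn.
by rewrite toC_2sin cis_base conjc_omegaX.
Qed.

Lemma peval_e_k k j : (0 < k < n)%N -> (j < n)%N ->
  peval (real_complex R) (omega ^+ j) (e_k R n k) = (j == (n - k)%N)%:R + (j == k)%:R.
Proof.
move=> /andP[k_gt0 k_lt_n] j_lt_n; rewrite peval_realE.
under eq_bigr => p _ do
  rewrite toC_e_k ?(ltnW k_lt_n) // -mulrA mulrDl -!exprMn -!exprD.
rewrite -mulr_sumr big_split /= !(sum_expr_prim_root_small omega_primitive); try lia.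
have -> : (k + j == 0)%N = false by lia.
have -> : (n - k + j == 0)%N = false by lia.
have -> : (k + j == n)%N = (j == n - k)%N by apply/eqP/eqP; lia.
have -> : (n - k + j == n)%N = (j == k) by apply/eqP/eqP; lia.
by rewrite /= -mulrDl mulrC mulfK // natC_neq0.
Qed.

Lemma peval_et_k k j : (0 < k < n)%N -> (j < n)%N ->
  peval (real_complex R) (omega ^+ j) (et_k R n k) =
  'i%C * ((j == k)%:R - (j == (n - k)%N)%:R).
Proof.
move=> /andP[k_gt0 k_lt_n] j_lt_n; rewrite peval_realE.
under eq_bigr => p _ do
  rewrite toC_et_k ?(ltnW k_lt_n) // -!mulrA mulrBl -!exprMn -!exprD.
rewrite -!mulr_sumr sumrB !(sum_expr_prim_root_small omega_primitive); try lia.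
have -> : (k + j == 0)%N = false by lia.
have -> : (n - k + j == 0)%N = false by lia.
have -> : (k + j == n)%N = (j == n - k)%N by apply/eqP/eqP; lia.
have -> : (n - k + j == n)%N = (j == k) by apply/eqP/eqP; lia.
by rewrite /= -mulrBl mulrCA mulrC [_^-1 * _]mulrC mulfK ?natC_neq0 // mulrC.
Qed.

Lemma peval_root_elt z vp vm (v vt : 'I_h -> R) :
  peval idfun z (root_elt vp vm v vt) =
  vp * peval (real_complex R) z (e_plus R n)
  + (if ~~ odd n then vm * peval (real_complex R) z (e_minus R n) else 0)
  + \sum_(k < h) (toC (v k) * peval (real_complex R) z (e_k R n k.+1)
                 + toC (vt k) * peval (real_complex R) z (et_k R n k.+1)).
Proof.
rewrite !peval_realE /peval; under eq_bigr => p _ do rewrite ffunE !mulrDl.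
rewrite !big_split /=; congr (_ + _ + _).
- by rewrite mulr_sumr; apply: eq_bigr => p _; ring.
- case: ifP => _; last by rewrite big1 // => p _; rewrite mul0r.
  by rewrite mulr_sumr; apply: eq_bigr => p _; ring.
- rewrite -[RHS]big_split /=; under eq_bigr => p _ do rewrite mulr_suml.
  rewrite exchange_big /=; apply: eq_bigr => k _.
  by rewrite !mulr_sumr -big_split /=; apply: eq_bigr => p _; rewrite -!toCE; ring.
Qed.

Lemma peval_root_elt_omega j vp vm (v vt : 'I_h -> R) : (j < n)%N ->
  peval idfun (omega ^+ j) (root_elt vp vm v vt) =
  (j == 0)%:R * vp + (~~ odd n && (j == n./2))%:R * vm
  + (\sum_(k < h | j == k.+1) (toC (v k) + 'i%C * toC (vt k))
     + \sum_(k < h | j == (n - k.+1)%N) (toC (v k) - 'i%C * toC (vt k))).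
Proof.
move=> j_lt_n; rewrite peval_root_elt peval_e_plus // mulrC; congr (_ + _ + _).
  case: ifP => [n_even | _]; first by rewrite peval_e_minus // mulrC.
  by rewrite /= mulr0n mul0r.
rewrite [X in _ = X + _]big_mkcond [X in _ = _ + X]big_mkcond -big_split /=.
apply: eq_bigr => k _.
have k_range : (0 < k.+1 < n)%N by have := ltn_ord k; move: halves; lia.
rewrite peval_e_k // peval_et_k //.
by case: (j == k.+1); case: (j == (n - k.+1)%N); rewrite /= ?mulr1n ?mulr0n; ring.
Qed.

Lemma peval_root_elt_zero vp vm (v vt : 'I_h -> R) :
  peval idfun 1 (root_elt vp vm v vt) = vp.
Proof.
rewrite -(expr0 omega) peval_root_elt_omega // eqxx mul1r.
have -> : (~~ odd n && (0 == n./2)) = false by move: halves; lia.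
rewrite mulr0n mul0r addr0 !big_pred0 ?addr0 // => k /=; move: (ltn_ord k) halves; lia.
Qed.

Lemma peval_root_elt_half vp vm (v vt : 'I_h -> R) : ~~ odd n ->
  peval idfun (omega ^+ n./2) (root_elt vp vm v vt) = vm.
Proof.
move=> n_even; rewrite peval_root_elt_omega; last by move: halves; lia.
have -> : (n./2 == 0)%N = false by move: halves; lia.
rewrite mulr0n mul0r add0r n_even eqxx /= mulr1n mul1r !big_pred0 ?addr0 // => k /=;
  move: (ltn_ord k) halves; lia.
Qed.

Lemma peval_root_elt_low vp vm (v vt : 'I_h -> R) (k : 'I_h) :
  peval idfun (omega ^+ k.+1) (root_elt vp vm v vt) = toC (v k) + 'i%C * toC (vt k).
Proof.
have k_lt := ltn_ord k.
rewrite peval_root_elt_omega; last by move: halves; lia.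
have -> : (~~ odd n && (k.+1 == n./2)) = false by move: halves; lia.
rewrite /= !mulr0n !mul0r !add0r (big_pred1 k) ?big_pred0 ?addr0 // => i /=.
by move: (ltn_ord i) halves; lia.
Qed.

Lemma peval_root_elt_high vp vm (v vt : 'I_h -> R) (k : 'I_h) :
  peval idfun (omega ^+ (n - k.+1)) (root_elt vp vm v vt) = toC (v k) - 'i%C * toC (vt k).
Proof.
have k_lt := ltn_ord k.
rewrite peval_root_elt_omega; last by move: halves; lia.
have -> : (n - k.+1 == 0)%N = false by move: halves; lia.
have -> : (~~ odd n && (n - k.+1 == n./2)%N) = false by move: halves; lia.
rewrite !mulr0n !mul0r !add0r big_pred0 ?(big_pred1 k) ?add0r // => i /=.
  by rewrite -val_eqE /=; apply/eqP/eqP; move: (ltn_ord i) halves; lia.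
by move: (ltn_ord i) halves; lia.
Qed.

End CanonicalBaseSpectrum.

Lemma conj_closed_prod (R : realType) m (w : 'I_m -> R[i]) :
  map_poly conjc (\prod_(p < m) ('X - (w p)%:P)) = \prod_(p < m) ('X - (w p)%:P) ->
  conj_closed w.
Proof.
move=> w_real; apply: prod_XsubC_eq; rewrite !big_map.
under eq_bigr do rewrite conjC_conjc.
by rewrite -(map_prod_XsubC conjc); exact: w_real.
Qed.

Section PolyRoots.
Variable F : closedFieldType.

Definition poly_roots (p : {poly F}) : seq F := sval (closed_field_poly_normal p).

Lemma prod_XsubC_poly_roots p :
  p \is monic -> \prod_(x <- poly_roots p) ('X - x%:P) = p.
Proof.
rewrite /poly_roots; case: closed_field_poly_normal => rs /= p_eq /monicP lc_p.
by rewrite [RHS]p_eq lc_p scale1r.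
Qed.

Lemma size_poly_roots p : p \is monic -> size (poly_roots p) = (size p).-1.
Proof. by move=> p_monic; rewrite -{2}(prod_XsubC_poly_roots p_monic) size_prod_XsubC. Qed.

End PolyRoots.

Variant freq_spec (n j : nat) : Type :=
| FreqZero of j = 0
| FreqHalf of ~~ odd n & j = n./2
| FreqLow (k : 'I_(n.-1./2)) of j = k.+1
| FreqHigh (k : 'I_(n.-1./2)) of j = (n - k.+1)%N.

Lemma freqP n j : (j < n)%N -> freq_spec n j.
Proof.
move=> j_lt_n; have halves := (odd_double_half n, odd_double_half n.-1).
have [j0 | j_gt0] := posnP j; first exact: FreqZero j0.
have [/andP[n_even /eqP j_half] | not_half] := boolP (~~ odd n && (j == n./2)).
  exact: FreqHalf n_even j_half.
have [j_low | j_high] := leqP j n.-1./2.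
  have k_lt : (j.-1 < n.-1./2)%N by lia.
  by apply: (@FreqLow n j (Ordinal k_lt)) => /=; lia.
have k_lt : ((n - j).-1 < n.-1./2)%N by move: halves; lia.
by apply: (@FreqHigh n j (Ordinal k_lt)) => /=; lia.
Qed.

Section Factorization.
Variables (R : realType) (n m : nat) (a : 'I_m -> polar R n).
Hypothesis n_gt0 : (0 < n)%N.
Local Notation omega := (omega R n).

Definition ppoly_at (z : R[i]) : {poly R[i]} :=
  monic_of_coefs (fun l => peval (real_complex R) z (a l)).

Definition roots_at (z : R[i]) (p : 'I_m) : R[i] := (poly_roots (ppoly_at z))`_p.

Lemma prod_roots_at z : \prod_(p < m) ('X - (roots_at z p)%:P) = ppoly_at z.
Proof.
have monic_z : ppoly_at z \is monic := monic_of_coefs_monic _.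
rewrite -[RHS](prod_XsubC_poly_roots monic_z) (big_nth 0) size_poly_roots //.
by rewrite size_monic_of_coefs big_mkord.
Qed.

Lemma peval_complexify z (x : polar R n) :
  peval idfun z (complexify x) = peval (real_complex R) z x.
Proof. by apply: eq_bigr => p _; rewrite ffunE. Qed.

Lemma peval_complexify_ppoly z u : z ^+ n = 1 ->
  peval idfun z (complexify (ppoly a u)) = (ppoly_at z).[peval idfun z (complexify u)].
Proof. by move=> z_unity; rewrite !peval_complexify peval_ppoly. Qed.

Lemma conjc_peval_real z (x : polar R n) :
  conjc (peval (real_complex R) z x) = peval (real_complex R) (conjc z) x.
Proof.
rewrite /peval rmorph_sum; apply: eq_bigr => p _.
by rewrite rmorphM rmorphXn /= oppr0.
Qed.

Lemma conjc_ppoly_at z : map_poly conjc (ppoly_at z) = ppoly_at (conjc z).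
Proof.
rewrite /ppoly_at map_monic_of_coefs /monic_of_coefs; congr (_ + _).
by apply: eq_bigr => l _ /=; rewrite conjc_peval_real.
Qed.

Lemma conj_closed_roots_at z : conjc z = z -> conj_closed (roots_at z).
Proof.
by move=> z_real; apply: conj_closed_prod; rewrite prod_roots_at conjc_ppoly_at z_real.
Qed.

Definition factor_root (p : 'I_m) : polar R[i] n :=
  root_elt (roots_at 1 p) (roots_at (omega ^+ n./2) p)
    (fun k => complex.Re (roots_at (omega ^+ k.+1) p))
    (fun k => complex.Im (roots_at (omega ^+ k.+1) p)).

Lemma prod_peval_factor_root j : (j < n)%N ->
  \prod_(p < m) ('X - (peval idfun (omega ^+ j) (factor_root p))%:P) =
  ppoly_at (omega ^+ j).
Proof.
case/freqP => [->|n_even ->|k ->|k ->].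
- rewrite expr0; under eq_bigr do rewrite peval_root_elt_zero //.
  exact: prod_roots_at.
- under eq_bigr do rewrite peval_root_elt_half //.
  exact: prod_roots_at.
- under eq_bigr do rewrite peval_root_elt_low // toC_Re_Im.
  exact: prod_roots_at.
- under eq_bigr do rewrite peval_root_elt_high // toC_Re_Im_conj.
  (* the a_l are real, so conjugation maps the roots at omega^k to those at omega^(n-k) *)
  have k_le_n : (k.+1 <= n)%N by have := ltn_ord k; have := odd_double_half n.-1; lia.
  have := conjc_omegaX R 1 n_gt0 k_le_n; rewrite !expr1 => <-.
  by rewrite -(map_prod_XsubC conjc) prod_roots_at conjc_ppoly_at.
Qed.

End Factorization.

Theorem mainTheorem18 (R : realType) (n m : nat) (hn : (2 <= n)%N) (hm : (1 <= m)%N)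
    (a : 'I_m -> polar R n) :
  exists (vplus vminus : 'I_m -> R[i]) (v vt : 'I_m -> 'I_(n.-1./2) -> R),
    conj_closed vplus /\ (~~ odd n -> conj_closed vminus) /\
    forall u : polar R n,
      complexify (ppoly a u) =
      pprod (fun p : 'I_m =>
        psub (complexify u) (root_elt (vplus p) (vminus p) (v p) (vt p))).
Proof.
have n_gt0 : (0 < n)%N := ltnW hn.
have prim_omega := omega_prim R n_gt0.
exists (roots_at a 1), (roots_at a (omega R n ^+ n./2)),
  (fun p k => complex.Re (roots_at a (omega R n ^+ k.+1) p)),
  (fun p k => complex.Im (roots_at a (omega R n ^+ k.+1) p)).
split; [|split].
- by apply: conj_closed_roots_at; rewrite -conjC_conjc conjC1.
- move=> n_even; apply: conj_closed_roots_at.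
  by rewrite (prim_root_half prim_omega) // -conjC_conjc conjCN1.
- move=> u; apply: (peval_inj prim_omega) => j j_lt_n.
  have unity_j : (omega R n ^+ j) ^+ n = 1.
    by rewrite exprAC (prim_expr_order prim_omega) expr1n.
  rewrite peval_complexify_ppoly // peval_pprod // -(prod_peval_factor_root a n_gt0 j_lt_n).
  rewrite horner_prod; apply: eq_bigr => p _.
  by rewrite peval_psub hornerXsubC.
Qed.
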